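(* For each $p\ge2$ let $y=(y_1,\dots,y_p)$ with $y_i=\mu_i+\epsilon_i$, $\epsilon_i$ i.i.d. $N(0,1)$, where $\mu_1=r\sqrt{2\log p}$ for a fixed constant $r>1$ and $\mu_i=0$ for $i\ge2$. Let $\lambda_1\ge\lambda_2$ be the two largest values among $|y_1|,\dots,|y_p|$, and let $\tilde\Phi=1-\Phi$ be the standard Gaussian survival function. Then the $p$-value $\tilde\Phi(\lambda_1)/\tilde\Phi(\lambda_2)$ converges to $0$ in probability as $p\to\infty$; in particular, for every fixed $\alpha\in(0,1)$, $\Pr\big(\tilde\Phi(\lambda_1)/\tilde\Phi(\lambda_2)\le\alpha\big)\to1$.
   Context: This is the setting of groups of size one with an orthonormal design reduced to the identity design $X=I_p$, $n=p$; here $\lambda_1,\lambda_2$ are the first two knots of the LASSO solution path and $\tilde\Phi(\lambda_1)/\tilde\Phi(\lambda_2)$ is the first-step truncated-$\chi$ $p$-value. *)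

From HB Require Import structures.
From mathcomp Require Import all_boot all_order all_algebra.
From mathcomp Require Import all_classical all_reals all_analysis.
Set Implicit Arguments. Unset Strict Implicit. Unset Printing Implicit Defensive.
Import Order.TTheory GRing.Theory Num.Theory.
Import numFieldNormedType.Exports.
Local Open Scope classical_set_scope.
Local Open Scope ring_scope.

Definition std_Phi {R : realType} (x : R) : R :=
  fine (normal_prob (0:R) 1 `]-oo, x]).
Definition std_surv {R : realType} (x : R) : R := 1 - std_Phi x.

Definition mutually_independent {R : realType} {d} {T : measurableType d}
  (P : probability T R) (I : finType) (X : I -> T -> R) : Prop :=
  forall A : I -> set R, (forall i, measurable (A i)) ->
    fine (P (\bigcap_(i in [set: I]) (X i @^-1` A i))) =
    \prod_(i : I) fine (P (X i @^-1` A i)).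

(* Mean vector: mu_1 = r sqrt(2 log p) (index 0 here), mu_i = 0 otherwise. *)
Definition mean_vec {R : realType} (r : R) (p : nat) (i : 'I_p) : R :=
  if nat_of_ord i == 0%N then r * Num.sqrt (2 * ln (p%:R)) else 0.

Definition sorted_abs {R : realType} (p : nat) (y : 'I_p -> R) : seq R :=
  sort (fun a b : R => b <= a) [seq `|y i| | i <- enum 'I_p].

Definition lambda1 {R : realType} (p : nat) (y : 'I_p -> R) : R :=
  nth 0 (sorted_abs y) 0.
Definition lambda2 {R : realType} (p : nat) (y : 'I_p -> R) : R :=
  nth 0 (sorted_abs y) 1.

Definition pvalue {R : realType} (p : nat) (y : 'I_p -> R) : R :=
  std_surv (lambda1 y) / std_surv (lambda2 y).

From HB Require Import structures.
From mathcomp Require Import all_boot all_order all_algebra.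
From mathcomp Require Import all_classical all_reals all_analysis.
From mathcomp Require Import ring lra measurable_realfun.
Import Order.TTheory GRing.Theory Num.Theory.
Import numFieldNormedType.Exports.
Local Open Scope classical_set_scope.
Local Open Scope ring_scope.

(* Write S = sqrt (2 log p).  Gaussian tails and a union bound show that, outside an
   event of probability O(p^-c) for some c > 0, |eps_1| <= c S and max_i |eps_i| <= s S
   with 1 < s and s + c < r.  There lambda_1 >= |y_1| >= (r - c) S and lambda_2 <= s S,
   so lambda_1 - lambda_2 >= D for any fixed D once p is large.  Shifting the Gaussian
   density gives tildePhi (x + D) <= exp (- D^2 / 2) tildePhi x for x, D >= 0, hence the
   p-value is at most exp (- D^2 / 2), which is below any given level for D large. *)

Section gaussian_tail.
Context {R : realType}.
Implicit Types x t D : R.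
Local Notation phi := (normal_pdf (0:R) 1).
Local Notation NP := (normal_prob (0:R) 1).

Lemma std_normal_pdfE x : phi x = normal_peak 1 * expR (- x ^+ 2 / 2).
Proof. by rewrite normal_pdfE ?oner_neq0 //= /normal_fun subr0 expr1n. Qed.

Lemma std_normal_pdf_shift x D :
  phi (x + D) = phi x * expR (- (x * D) - D ^+ 2 / 2).
Proof. by rewrite !std_normal_pdfE -mulrA -expRD sqrrD; congr (_ * expR _); field. Qed.

Lemma std_normal_pdfN x : phi (- x) = phi x.
Proof. by rewrite !std_normal_pdfE sqrrN. Qed.

Lemma measurable_std_normal_pdf_EFin (A : set R) : measurable_fun A (EFin \o phi).
Proof. by apply/measurable_EFinP; apply: measurable_funTS; exact: measurable_normal_pdf. Qed.

Lemma std_normal_prob_fin (A : set R) : measurable A -> NP A \is a fin_num.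
Proof.
move=> mA; rewrite ge0_fin_numE ?measure_ge0//.
have NP1 : (NP A <= 1)%E by apply: probability_le1.
by rewrite (le_lt_trans NP1) ?ltry.
Qed.

Lemma std_normal_prob_addr x D :
  NP `[x + D, +oo[ = (\int[lebesgue_measure]_(t in `[x, +oo[) (phi (t + D))%:E)%E.
Proof.
have dE : ((fun t : R => t + D)^`())%classic = cst 1.
  by apply/funext => t; rewrite derive1E deriveD// derive_id derive_cst addr0.
rewrite /normal_prob
  (@increasing_ge0_integration_by_substitutiony _ (fun t => t + D) phi x).
- by apply: eq_integral => t _; rewrite dE /= mulr1.
- by move=> a b _ _; rewrite ltrD2r.
- by rewrite dE => ? _; exact: cst_continuous.
- by rewrite dE; exact: is_cvg_cst.
- by rewrite dE; exact: is_cvg_cst.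
- split; first by move=> t _; exact: derivableD.
  by apply: cvg_at_right_filter; apply: cvgD; [exact: cvg_id|exact: cvg_cst].
- exact: cvg_addrr.
- exact/continuous_subspaceT/continuous_normal_pdf/oner_neq0.
- by move=> t _; exact: normal_pdf_ge0.
Qed.

Lemma std_normal_prob_addr_le x D : 0 <= D ->
  (NP `[(x + D)%R, +oo[ <= (expR (- (x * D) - D ^+ 2 / 2)%R)%:E * NP `[x, +oo[)%E.
Proof.
move=> D0; rewrite std_normal_prob_addr /normal_prob -ge0_integralZl//; last 2 first.
- exact: measurable_std_normal_pdf_EFin.
- by move=> t _; rewrite lee_fin normal_pdf_ge0.
apply: ge0_le_integral => //.
- by move=> t _; rewrite lee_fin normal_pdf_ge0.
- apply/measurable_EFinP; apply: measurable_funTS.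
  by apply: measurableT_comp; [exact: measurable_normal_pdf|exact: measurable_funD].
- by apply: measurable_funeM; exact: measurable_std_normal_pdf_EFin.
move=> t; rewrite /= in_itv /= andbT => xt.
rewrite std_normal_pdf_shift -EFinM lee_fin mulrC ler_wpM2r ?normal_pdf_ge0//.
by rewrite ler_expR lerD2r lerN2 ler_wpM2r.
Qed.

Lemma std_normal_prob_Ny t : NP `]-oo, - t] = NP `[t, +oo[.
Proof.
rewrite /normal_prob ge0_integration_by_substitutionNy.
- by apply: eq_integral => u _; rewrite /= std_normal_pdfN.
- exact/continuous_subspaceT/continuous_normal_pdf/oner_neq0.
- by move=> u _; exact: normal_pdf_ge0.
Qed.

Lemma std_normal_prob_oy t : NP `]t, +oo[ = NP `[t, +oo[.
Proof.
by rewrite /normal_prob integral_itv_obnd_cbnd //; exact: measurable_std_normal_pdf_EFin.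
Qed.

Lemma std_survE x : std_surv x = fine (NP `]x, +oo[).
Proof.
rewrite /std_surv /std_Phi -setCitvr probability_setC//.
by rewrite fineB ?std_normal_prob_fin//= opprB addrC subrK.
Qed.

Lemma std_surv_ge0 x : 0 <= std_surv x.
Proof. by rewrite std_survE fine_ge0 ?measure_ge0. Qed.

Lemma std_surv_nonincreasing : {homo @std_surv R : x y /~ x <= y}.
Proof.
move=> x y xy; rewrite !std_survE fine_le ?std_normal_prob_fin//.
apply: le_measure; rewrite ?inE// => t /=; rewrite !in_itv /= !andbT.
exact: le_lt_trans.
Qed.

Lemma std_surv_addr_le x D : 0 <= x -> 0 <= D ->
  std_surv (x + D) <= expR (- (D ^+ 2 / 2)) * std_surv x.
Proof.
move=> x0 D0; rewrite !std_survE !std_normal_prob_oy -lee_fin EFinM.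
rewrite !fineK ?std_normal_prob_fin//.
apply: le_trans (std_normal_prob_addr_le x D D0) _.
apply: lee_wpmul2r; first exact: measure_ge0.
by rewrite lee_fin ler_expR; have := mulr_ge0 x0 D0; lra.
Qed.

Lemma std_surv_le_expR t : 0 <= t -> std_surv t <= expR (- (t ^+ 2 / 2)).
Proof.
move=> t0; have := std_surv_addr_le 0 t (lexx 0) t0; rewrite add0r => /le_trans; apply.
rewrite ler_piMr ?expR_ge0// std_survE -lee_fin fineK ?std_normal_prob_fin//.
exact: probability_le1.
Qed.

Lemma set_abs_gtE t : [set u : R | t < `|u|] = `]t, +oo[ `|` `]-oo, - t[.
Proof.
apply/seteqP; split => u /=; rewrite !in_itv /= ?andbT.
  by rewrite ltr_normr => /orP[|]; [left|right; rewrite ltrNr].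
by case=> tu; rewrite ltr_normr ?tu // ltrNr tu orbT.
Qed.

Lemma std_normal_prob_abs_gt t : 0 <= t ->
  (NP [set u : R | (t < `|u|)%R] <= (2 * expR (- (t ^+ 2 / 2)))%:E)%E.
Proof.
move=> t0; rewrite set_abs_gtE; apply: le_trans (measureU2 _ _ _) _ => //.
have lower_le_upper : (NP `]-oo, (- t)%R[ <= NP `]t, +oo[)%E.
  rewrite std_normal_prob_oy -std_normal_prob_Ny; apply: le_measure; rewrite ?inE//.
  by move=> u; rewrite /= !in_itv /= => /ltW.
have upper_le : (NP `]t, +oo[ <= (expR (- (t ^+ 2 / 2)))%:E)%E.
  by rewrite -[NP _]fineK ?std_normal_prob_fin // -std_survE lee_fin std_surv_le_expR.
apply: le_trans (leeD2l _ lower_le_upper) _; apply: le_trans (leeD upper_le upper_le) _.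
by rewrite -EFinD lee_fin mulr2n mulrDl mul1r.
Qed.

End gaussian_tail.

Section order_statistics.
Context {R : realType}.
Local Notation ge := (fun a b : R => b <= a).

Lemma nth_sorted_ge_gt (s : seq R) (c : R) k :
  sorted ge s -> all (fun x => 0 <= x) s -> 0 <= c ->
  (c < nth 0 s k) = (k < count (fun x => (c < x)%R) s)%N.
Proof.
move=> + + c0; elim: s k => [|x s IH] k /=; first by rewrite nth_nil ltNge c0.
move=> xs /andP[x0 s0]; have /allP x_ge := order_path_min (rev_trans le_trans) xs.
have [cx|xc] := ltP c x.
  by case: k => [|k] /=; rewrite ?cx // IH ?(path_sorted xs) // add1n ltnS.
have -> : count (fun y => c < y) s = 0%N.
  apply/eqP; rewrite -leqn0 leqNgt -has_count; apply/hasPn => y ys.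
  by rewrite -leNgt (le_trans _ xc) // x_ge.
case: k => [|k] /=; first by rewrite ltNge xc.
apply/negbTE; rewrite -leNgt.
have [ks|ks] := ltnP k (size s); last by rewrite nth_default.
by rewrite (le_trans _ xc) // x_ge // mem_nth.
Qed.

Context {p : nat}.
Implicit Type y : 'I_p -> R.

Lemma sorted_abs_ge0 y : all (fun x => 0 <= x) (sorted_abs y).
Proof. by rewrite all_sort; apply/allP => _ /mapP[i _ ->]. Qed.

Lemma nth_sorted_abs_ge0 y k : 0 <= nth 0 (sorted_abs y) k.
Proof.
have [ks|ks] := ltnP k (size (sorted_abs y)); last by rewrite nth_default.
exact: (allP (sorted_abs_ge0 y)) _ (mem_nth 0 ks).
Qed.

Lemma nth_sorted_abs_gt y (c : R) k : 0 <= c ->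
  (c < nth 0 (sorted_abs y) k) = (k < count (fun i => (c < `|y i|)%R) (enum 'I_p))%N.
Proof.
move=> c0; rewrite nth_sorted_ge_gt ?sorted_abs_ge0 //.
  by rewrite count_sort count_map.
by apply: sort_sorted => a b; rewrite orbC le_total.
Qed.

Lemma lambda1_ge_abs y i : `|y i| <= lambda1 y.
Proof.
rewrite leNgt; apply/negP => yi.
have := nth_sorted_abs_gt y (lambda1 y) 0 (nth_sorted_abs_ge0 y 0).
rewrite -/(lambda1 y) ltxx => /esym; rewrite -has_count => /negP; apply.
by apply/hasP; exists i; rewrite ?mem_enum.
Qed.

Lemma lambda2_le_abs_off y (M : R) (i0 : 'I_p) : 0 <= M ->
  (forall i, i != i0 -> `|y i| <= M) -> lambda2 y <= M.
Proof.
move=> M0 yM; rewrite leNgt /lambda2 nth_sorted_abs_gt // -leqNgt.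
apply: leq_trans (sub_count (a2 := pred1 i0) _ _) _.
  by move=> i /=; apply: contraLR => /yM; rewrite -leNgt.
by rewrite count_uniq_mem ?enum_uniq // leq_b1.
Qed.

Lemma pvalue_le_expR y (D : R) : 0 <= D -> lambda2 y + D <= lambda1 y ->
  pvalue y <= expR (- (D ^+ 2 / 2)).
Proof.
move=> D0 gap; rewrite /pvalue.
have [->|nz] := eqVneq (std_surv (lambda2 y)) 0; first by rewrite invr0 mulr0 expR_ge0.
rewrite ler_pdivrMr ?lt_def ?nz ?std_surv_ge0 //.
apply: le_trans (std_surv_nonincreasing _ _ gap) _.
exact: std_surv_addr_le (nth_sorted_abs_ge0 y 1) D0.
Qed.

End order_statistics.

Lemma natr_count {R : realType} (T : Type) (a : pred T) (s : seq T) :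
  (count a s)%:R = \sum_(x <- s) ((a x)%:R : R).
Proof. by elim: s => [|x s IH]; rewrite ?big_nil // big_cons natrD IH. Qed.

Lemma measurable_inv {R : realType} : measurable_fun setT (fun x : R => x^-1).
Proof.
have -> : [set: R] = `]-oo, 0[ `|` ([set 0] `|` `]0, +oo[).
  apply/seteqP; split => x // _ /=; rewrite !in_itv /= andbT.
  by case: ltgtP => H; [left|right; right|right; left].
apply/measurable_funU => //; first exact: measurableU.
split.
  apply: open_continuous_measurable_fun; first exact: interval_open.
  by move=> x; rewrite inE /= in_itv /= => x0; apply: inv_continuous; rewrite lt_eqF.
apply/measurable_funU => //; split; first exact: measurable_fun_set1.
apply: open_continuous_measurable_fun; first exact: interval_open.
by move=> x; rewrite inE /= in_itv /= andbT => x0; apply: inv_continuous; rewrite gt_eqF.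
Qed.

Lemma measurable_std_surv {R : realType} : measurable_fun setT (@std_surv R).
Proof. by apply: nonincreasing_measurable => // x y; exact: std_surv_nonincreasing. Qed.

Section measurable_pvalue.
Context {d} {T : measurableType d} {R : realType}.

Lemma measurable_gt {g : T -> R} (a : R) :
  measurable_fun setT g -> measurable [set w | a < g w].
Proof.
move=> mg; have := mg measurableT _ (measurable_itv `]a, +oo[).
by rewrite setTI preimage_itvoy.
Qed.

Variables (p : nat) (Y : 'I_p -> T -> R).
Hypothesis mY : forall i, measurable_fun setT (Y i).

(* [a < k-th largest |Y_i|] is [k < #{i | a < |Y_i|}], and the count is a sum of indicators. *)
Lemma measurable_nth_sorted_abs k :
  measurable_fun setT (fun w => nth 0 (sorted_abs (fun i => Y i w)) k).
Proof.
apply: (measurability _ (RGenOInfty.measurableE R)) => //.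
move=> /= _ [_ [a ->] <-]; rewrite preimage_itvoy setTI.
have [a0|a0] := ltP a 0.
  rewrite (_ : [set _ | _] = setT) //; apply/seteqP; split => // w _ /=.
  exact: lt_le_trans a0 (nth_sorted_abs_ge0 _ _).
pose f w := \sum_(i <- enum 'I_p) (\1_[set w | a < `|Y i w|] w : R).
have mf : measurable_fun setT f.
  apply: measurable_sum => i; apply/measurable_indic/measurable_gt.
  exact: measurableT_comp.
have fE w : f w = (count (fun i => a < `|Y i w|) (enum 'I_p))%:R.
  rewrite natr_count /f; apply: eq_bigr => i _; rewrite indicE.
  have [ai|ai] := boolP (a < `|Y i w|); first by rewrite mem_set.
  by rewrite memNset //=; apply/negP.
rewrite (_ : [set _ | _] = [set w | k%:R < f w]); first exact: measurable_gt.
by apply/seteqP; split => w /=; rewrite fE ltr_nat nth_sorted_abs_gt.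
Qed.

Lemma measurable_pvalue : measurable_fun setT (fun w => pvalue (fun i => Y i w)).
Proof.
apply: measurable_funM.
  exact: measurableT_comp measurable_std_surv (measurable_nth_sorted_abs 0).
apply: measurableT_comp measurable_inv _.
exact: measurableT_comp measurable_std_surv (measurable_nth_sorted_abs 1).
Qed.

End measurable_pvalue.

Section asymptotics.
Context {R : realType}.

Lemma ln_natr_ge (M : R) : \forall p \near \oo, M <= ln (p%:R : R).
Proof.
exists (Num.truncn (expR M)).+1 => // p /= Mp.
have expM_lt : expR M < p%:R.
  by apply: lt_le_trans (truncnS_gt _) _; rewrite ler_nat.
rewrite -{1}(expRK M) ler_ln ?posrE ?expR_gt0 ?(lt_trans (expR_gt0 M)) //.
exact: ltW.
Qed.

Lemma expR_ln_natr_le (k b : R) : 0 < k -> 0 < b ->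
  \forall p \near \oo, expR (- (k * ln (p%:R : R))) <= b.
Proof.
move=> k0 b0; near=> p.
have : - ln b / k <= ln (p%:R : R) by near: p; exact: ln_natr_ge.
rewrite ler_pdivrMr // => lnp.
rewrite -[leRHS](lnK (x := b)) ?posrE // ler_expR; lra.
Unshelve. all: by end_near. Qed.

Lemma sqrt_ln_natr_ge (k D : R) : 0 < k ->
  \forall p \near \oo, D <= k * Num.sqrt (2 * ln (p%:R : R)).
Proof.
move=> k0; near=> p; rewrite mulrC -ler_pdivrMr //.
have lnp : (D / k) ^+ 2 <= 2 * ln (p%:R : R).
  by rewrite [2 * _]mulrC -ler_pdivrMr //; near: p; exact: ln_natr_ge.
apply: le_trans (ler_norm _) _.
by rewrite -sqrtr_sqr ler_sqrt // (le_trans (sqr_ge0 _) lnp).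
Unshelve. all: by end_near. Qed.

Lemma sqr_mul_sqrt_ln (k : R) (p : nat) : (0 < p)%N ->
  (k * Num.sqrt (2 * ln (p%:R : R))) ^+ 2 / 2 = k ^+ 2 * ln (p%:R : R).
Proof.
move=> p0; have ln0 : 0 <= ln (p%:R : R) by rewrite ln_ge0 // ler1n.
by rewrite exprMn sqr_sqrtr; [field | lra].
Qed.

Lemma natr_mul_expR_sqr_sqrt_ln (k : R) (p : nat) : (0 < p)%N ->
  p%:R * expR (- (k ^+ 2 * ln (p%:R : R))) = expR (- ((k ^+ 2 - 1) * ln (p%:R : R))).
Proof.
move=> p0; rewrite -[X in X * _](lnK (x := p%:R)) ?posrE ?ltr0n // -expRD.
by congr expR; ring.
Qed.
Lemma gaussian_union_bound_small (c s e : R) : 0 < c -> 1 < s -> 0 < e ->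
  \forall p \near \oo,
    2 * expR (- ((c * Num.sqrt (2 * ln (p%:R : R))) ^+ 2 / 2)) +
    p%:R * (2 * expR (- ((s * Num.sqrt (2 * ln (p%:R : R))) ^+ 2 / 2))) <= e.
Proof.
move=> c0 s1 e0; near=> p.
have p0 : (0 < p)%N by near: p; exact: nbhs_infty_gt.
have small_c : expR (- (c ^+ 2 * ln (p%:R : R))) <= e / 4.
  by near: p; apply: expR_ln_natr_le; [exact: exprn_gt0 | lra].
have small_s : expR (- ((s ^+ 2 - 1) * ln (p%:R : R))) <= e / 4.
  by near: p; apply: expR_ln_natr_le; [rewrite subr_gt0 expr_gt1 //; lra | lra].
rewrite (sqr_mul_sqrt_ln c _ p0) (sqr_mul_sqrt_ln s _ p0).
rewrite [p%:R * _]mulrCA (natr_mul_expR_sqr_sqrt_ln s _ p0).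
lra.
Unshelve. all: by end_near. Qed.
Lemma exists_expR_neg_sqr_lt (b : R) : 0 < b ->
  exists2 D : R, 0 <= D & expR (- (D ^+ 2 / 2)) < b.
Proof.
move=> b0; exists (Num.sqrt (2 / b)); first exact: sqrtr_ge0.
rewrite sqr_sqrtr ?divr_ge0 //; last lra.
rewrite (_ : 2 / b / 2 = b^-1); last by field; lra.
rewrite expRN -[ltRHS]invrK ltf_pV2 ?posrE ?expR_gt0 ?invr_gt0 //.
have := expR_ge1Dx b^-1; lra.
Qed.

End asymptotics.

Lemma measure_bigsetU_ord_le {d} {T : measurableType d} {R : realType}
    (mu : {measure set T -> \bar R}) {n : nat} {F : 'I_n -> set T} :
  (forall i, measurable (F i)) ->
  (mu (\big[setU/set0]_(i < n) F i) <= \sum_(i < n) mu (F i))%E.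
Proof.
move=> mF; pose A k := if insub k is Some i then F i else set0.
have AE (i : 'I_n) : F i = A i by rewrite /A valK.
rewrite (eq_bigr (fun i : 'I_n => A i)) => [|i _]; last exact: AE.
rewrite [leRHS](eq_bigr (fun i : 'I_n => mu (A i))) => [|i _]; last by rewrite AE.
by apply: Boole_inequality => k _; rewrite /A; case: insub.
Qed.

Section gaussian_noise.
Context {d} {T : measurableType d} {R : realType} {P : probability T R}.
Context {p : nat} (eps : 'I_p -> {RV P >-> R}).
Hypothesis eps_normal : forall i (A : set R), measurable A ->
  distribution P (eps i) A = normal_prob 0 1 A.

Lemma measurable_abs_gt i (t : R) : measurable [set w | t < `|eps i w|].
Proof. exact/measurable_gt/measurableT_comp/measurable_funPT. Qed.

Lemma prob_abs_gt i (t : R) : 0 <= t ->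
  (P [set w | (t < `|eps i w|)%R] <= (2 * expR (- (t ^+ 2 / 2)))%:E)%E.
Proof.
move=> t0; have mt : measurable [set u : R | (t < `|u|)%R].
  by rewrite set_abs_gtE; exact: measurableU.
have := eps_normal i _ mt; rewrite /distribution /pushforward => ->.
exact: std_normal_prob_abs_gt.
Qed.

Lemma prob_max_abs_gt (t : R) : 0 <= t ->
  (P (\big[setU/set0]_(i < p) [set w | (t < `|eps i w|)%R]) <=
   (p%:R * (2 * expR (- (t ^+ 2 / 2))))%:E)%E.
Proof.
move=> t0; apply: le_trans (measure_bigsetU_ord_le P (measurable_abs_gt ^~ t)) _.
apply: le_trans (lee_sum _ (fun i _ => prob_abs_gt i t t0)) _.
by rewrite sumEFin big_const_ord iter_addr_0 lee_fin [leRHS]mulr_natl.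
Qed.

Lemma prob_noise_gt (i0 : 'I_p) (a b : R) : 0 <= a -> 0 <= b ->
  (P ([set w | (a < `|eps i0 w|)%R] `|`
      \big[setU/set0]_(i < p) [set w | (b < `|eps i w|)%R]) <=
   (2 * expR (- (a ^+ 2 / 2)) + p%:R * (2 * expR (- (b ^+ 2 / 2))))%:E)%E.
Proof.
move=> a0 b0; have mB : measurable (\big[setU/set0]_(i < p) [set w | b < `|eps i w|]).
  by apply: bigsetU_measurable => i _; exact: measurable_abs_gt.
apply: le_trans (measureU2 _ (measurable_abs_gt i0 _) mB) _.
by rewrite EFinD; apply: leeD; [exact: prob_abs_gt | exact: prob_max_abs_gt].
Qed.

End gaussian_noise.

Lemma mean_vec_lambda_gap {R : realType} (r c s D : R) (p : nat) (i0 : 'I_p)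
    (e : 'I_p -> R) :
  nat_of_ord i0 = 0%N -> 0 <= s ->
  let S := Num.sqrt (2 * ln (p%:R : R)) in
  s * S + D <= (r - c) * S -> `|e i0| <= c * S -> (forall i, `|e i| <= s * S) ->
  lambda2 (fun i => mean_vec r i + e i) + D <= lambda1 (fun i => mean_vec r i + e i).
Proof.
move=> i00 s0 S gap e0 es; set y := fun i => _.
have S0 : 0 <= S := sqrtr_ge0 _.
have lambda2_le : lambda2 y <= s * S.
  apply: (lambda2_le_abs_off _ _ i0); first exact: mulr_ge0.
  move=> i ni; rewrite /y /mean_vec ifN ?add0r //.
  by apply: contra ni => /eqP i_0; apply/eqP/val_inj; rewrite /= i_0 i00.
have lambda1_ge : (r - c) * S <= lambda1 y.
  apply: le_trans (lambda1_ge_abs y i0); rewrite /y /mean_vec i00 eqxx -/S.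
  by apply: le_trans (lerB_normD _ _); rewrite mulrBl lerB // ler_norm.
lra.
Qed.

Lemma lambda_gap_whp {d} {T : measurableType d} {R : realType}
    {P : probability T R} {eps : forall p : nat, 'I_p -> {RV P >-> R}} {r D e : R} :
  1 < r ->
  (forall p : nat, (2 <= p)%N -> forall (i : 'I_p) (A : set R), measurable A ->
     distribution P (eps p i) A = normal_prob 0 1 A) ->
  0 <= D -> 0 < e ->
  \forall p \near \oo, exists2 B : set T, measurable B /\ (P B <= e%:E)%E &
    forall w, ~ B w -> lambda2 (fun i => mean_vec r i + eps p i w) + D <=
                      lambda1 (fun i => mean_vec r i + eps p i w).
Proof.
move=> r_gt1 eps_normal D0 e0; pose c := (r - 1) / 4; pose s := 1 + (r - 1) / 4.
have c0 : 0 < c by rewrite /c; lra.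
have s1 : 1 < s by rewrite /s; lra.
near=> p.
have p2 : (2 <= p)%N by near: p; exact: nbhs_infty_ge.
have p0 : (0 < p)%N by exact: leq_trans p2.
pose i0 := Ordinal p0.
have large_S : D <= (r - 1) / 2 * Num.sqrt (2 * ln (p%:R : R)).
  by near: p; apply: sqrt_ln_natr_ge; lra.
have noise_small :
    2 * expR (- ((c * Num.sqrt (2 * ln (p%:R : R))) ^+ 2 / 2)) +
    p%:R * (2 * expR (- ((s * Num.sqrt (2 * ln (p%:R : R))) ^+ 2 / 2))) <= e.
  by near: p; exact: gaussian_union_bound_small.
set S := Num.sqrt (2 * ln (p%:R : R)).
have S0 : 0 <= S := sqrtr_ge0 _.
pose B := [set w | c * S < `|eps p i0 w|] `|`
          \big[setU/set0]_(i < p) [set w | s * S < `|eps p i w|].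
exists B; first split.
- apply: measurableU; first exact: measurable_abs_gt.
  by apply: bigsetU_measurable => i _; exact: measurable_abs_gt.
- have sS0 : 0 <= s * S by rewrite mulr_ge0 // ltW // (lt_trans ltr01 s1).
  have cS0 : 0 <= c * S by rewrite mulr_ge0 // ltW.
  rewrite /B; apply: le_trans (prob_noise_gt _ (eps_normal p p2) i0 _ _ cS0 sS0) _.
  by rewrite lee_fin.
move=> w notB; apply: (mean_vec_lambda_gap _ c s _ _ i0) => //.
- by rewrite /s; lra.
- by rewrite /s /c; lra.
- by rewrite leNgt; apply/negP => ?; apply: notB; left.
- move=> i; rewrite leNgt; apply/negP => ?; apply: notB; right.
  by rewrite (bigD1 i) //=; left.
Unshelve. all: by end_near. Qed.

Lemma measurable_pvalue_mean_vec {d} {T : measurableType d} {R : realType}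
    {P : probability T R} {p : nat} (r : R) (eps : 'I_p -> {RV P >-> R}) :
  measurable_fun setT (fun w => pvalue (fun i => mean_vec r i + eps i w)).
Proof.
apply: measurable_pvalue => i.
by apply: measurable_funD => //; exact: measurable_funPT.
Qed.

Lemma prob_pvalue_gt {d} {T : measurableType d} {R : realType}
    (P : probability T R) (eps : forall p : nat, 'I_p -> {RV P >-> R}) (r b e : R) :
  1 < r ->
  (forall p : nat, (2 <= p)%N -> forall (i : 'I_p) (A : set R), measurable A ->
     distribution P (eps p i) A = normal_prob 0 1 A) ->
  0 < b -> 0 < e ->
  \forall p \near \oo,
    (P [set w | (b < pvalue (fun i : 'I_p => mean_vec r i + eps p i w))%R] <= e%:E)%E.
Proof.
move=> r_gt1 eps_normal b0 e0; have [D D0 Db] := exists_expR_neg_sqr_lt b b0.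
apply: filterS (lambda_gap_whp r_gt1 eps_normal D0 e0) => p [B [mB PB] gapB].
have mpv := measurable_gt b (measurable_pvalue_mean_vec r (eps p)).
apply: le_trans (le_measure _ (mem_set mpv) (mem_set mB) _) PB => w /= bw.
apply: contrapT => nBw; have := pvalue_le_expR _ _ D0 (gapB w nBw); lra.
Qed.

Section vanishing_probabilities.
Context {d} {T : measurableType d} {R : realType} (P : probability T R).
Variable A : nat -> set T.
Hypothesis A_small : forall e : R, 0 < e -> \forall p \near \oo, (P (A p) <= e%:E)%E.

Lemma cvg_prob0 : (fun p => fine (P (A p))) @ \oo --> (0 : R).
Proof.
apply/cvgrPdist_lt => x x0; have x2 : 0 < x / 2 by lra.
apply: filterS (A_small _ x2) => p PA.
have PA_fin : P (A p) \is a fin_num.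
  by rewrite ge0_fin_numE ?measure_ge0 // (le_lt_trans PA) ?ltry.
rewrite sub0r normrN ger0_norm ?fine_ge0 ?measure_ge0 //.
by apply: le_lt_trans (_ : _ <= x / 2) _; rewrite ?ltr_pdivrMr -?lee_fin ?fineK //; lra.
Qed.

Lemma cvg_probC1 : (forall p, measurable (A p)) ->
  (fun p => fine (P (~` A p))) @ \oo --> (1 : R).
Proof.
move=> mA; have -> : (fun p => fine (P (~` A p))) = (fun p => 1 - fine (P (A p))).
  by apply/funext => p; rewrite probability_setC // fineB ?fin_num_measure.
by rewrite -[X in _ --> X]subr0; apply: cvgB; [exact: cvg_cst | exact: cvg_prob0].
Qed.

End vanishing_probabilities.

Theorem mainTheorem3 (R : realType) (d : measure_display) (T : measurableType d)
  (P : probability T R) (eps : forall p : nat, 'I_p -> {RV P >-> R}) (r : R) :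
  1 < r ->
  (forall p : nat, (2 <= p)%N ->
     mutually_independent P (fun i : 'I_p => (eps p i : T -> R)) /\
     (forall (i : 'I_p) (A : set R), measurable A ->
        distribution P (eps p i) A = normal_prob 0 1 A)) ->
  let pv := fun (p : nat) (w : T) =>
    pvalue (fun i : 'I_p => mean_vec r i + eps p i w) in
  (forall e : R, 0 < e ->
     (fun p : nat => fine (P [set w | e < `|pv p w|])) @ \oo --> (0 : R)) /\
  (forall alpha : R, 0 < alpha < 1 ->
     (fun p : nat => fine (P [set w | pv p w <= alpha])) @ \oo --> (1 : R)).
Proof.
move=> r_gt1 eps_law pv.
have pv_gt_small b : 0 < b -> forall e : R, 0 < e ->
    \forall p \near \oo, (P [set w | (b < pv p w)%R] <= e%:E)%E.
  by move=> b0 e e0; apply: prob_pvalue_gt => // p p2; exact: (eps_law p p2).2.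
have pv_ge0 p w : 0 <= pv p w by apply: divr_ge0; exact: std_surv_ge0.
split=> [e e0 | a /andP[a0 _]].
  rewrite (_ : (fun p => _) = fun p => fine (P [set w | e < pv p w])).
    exact: cvg_prob0 (pv_gt_small e e0).
  apply/funext => p; congr (fine (P _)).
  by apply/seteqP; split => w /=; rewrite ger0_norm.
rewrite (_ : (fun p => _) = fun p => fine (P (~` [set w | a < pv p w]))).
  apply: cvg_probC1 (pv_gt_small a a0) _ => p.
  exact: measurable_gt (measurable_pvalue_mean_vec r (eps p)).
apply/funext => p; congr (fine (P _)).
by apply/seteqP; split => w /=; rewrite leNgt => /negP.
Qed.
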